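(* Let $F\colon\mathcal{A}\to\mathcal{B}$ be an exceptional functor and $A\in\mathcal{A}$. Then $$\mathcal{B}_{FA}=\langle \operatorname{im}F,\ \ker L\cap\ker\operatorname{Hom}^*(A,R(-))\rangle=\langle\operatorname{im}F,\ \ker L\cap(FA)^{\perp}\rangle$$ is a semiorthogonal decomposition.
   Context: All categories are $k$-linear triangulated, enhanced, and all functors are exact. $F$ is exceptional: it is fully faithful with left adjoint $L$ and right adjoint $R$. The dual twist $T'$ is defined by $T'\to\mathrm{id}_{\mathcal{B}}\xrightarrow{\eta_L}FL$, where $\eta_L$ is the unit. The Frobenius neighbourhood is $\mathcal{B}_{FA}:=\{B\in\mathcal{B}\mid\operatorname{Hom}^*(A,RT'B)=0\}$. Further notation: - $\operatorname{Hom}^*(X,Y)=\bigoplus_i\operatorname{Hom}(X,Y[i])[-i]$. - $X^{\perp}=\{B\mid\operatorname{Hom}^*(X,B)=0\}$. - $\ker\operatorname{Hom}^*(A,R(-))=\{B\mid\operatorname{Hom}^*(A,RB)=0\}$. A semiorthogonal decomposition $\mathcal{D}=\langle\mathcal{X},\mathcal{Y}\rangle$ of a triangulated category $\mathcal{D}$ by full subcategories $\mathcal{X},\mathcal{Y}$ means: - $\operatorname{Hom}^*(Y,X)=0$ for all $X\in\mathcal{X}$, $Y\in\mathcal{Y}$; - every $D\in\mathcal{D}$ fits into a triangle $D_{\mathcal{Y}}\to D\to D_{\mathcal{X}}$ with $D_{\mathcal{X}}\in\mathcal{X}$ and $D_{\mathcal{Y}}\in\mathcal{Y}$. *)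

From HB Require Import structures.
From mathcomp Require Import all_boot all_algebra.
Set Implicit Arguments. Unset Strict Implicit. Unset Printing Implicit Defensive.
Import GRing.Theory.
Local Open Scope ring_scope.

Record kcat (k : fieldType) := KCat {
  ob : Type;
  mor : ob -> ob -> lmodType k;
  idm : forall X, mor X X;
  mcomp : forall X Y Z, mor Y Z -> mor X Y -> mor X Z;
  comp_idl : forall X Y (f : mor X Y), mcomp (idm Y) f = f;
  comp_idr : forall X Y (f : mor X Y), mcomp f (idm X) = f;
  comp_assoc : forall X Y Z W (h : mor Z W) (g : mor Y Z) (f : mor X Y),
      mcomp h (mcomp g f) = mcomp (mcomp h g) f;
  comp_linl : forall X Y Z (a : k) (g g' : mor Y Z) (f : mor X Y),
      mcomp (a *: g + g') f = a *: mcomp g f + mcomp g' f;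
  comp_linr : forall X Y Z (a : k) (g : mor Y Z) (f f' : mor X Y),
      mcomp g (a *: f + f') = a *: mcomp g f + mcomp g f'
}.
Arguments ob {k} _.
Arguments mor {k _} X Y.
Arguments idm {k _} X.
Arguments mcomp {k _ X Y Z} g f.

Section CatDefs.
Variables (k : fieldType) (C : kcat k).

Definition is_iso (X Y : ob C) (f : mor X Y) :=
  exists g : mor Y X, mcomp g f = idm X /\ mcomp f g = idm Y.

Definition is_zero (Z : ob C) :=
  forall X : ob C, (forall f : mor Z X, f = 0) /\ (forall f : mor X Z, f = 0).

Definition is_biprod (X Y P : ob C) :=
  exists (i1 : mor X P) (i2 : mor Y P) (p1 : mor P X) (p2 : mor P Y),
    [/\ mcomp p1 i1 = idm X, mcomp p2 i2 = idm Y, mcomp p1 i2 = 0,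
        mcomp p2 i1 = 0 & mcomp i1 p1 + mcomp i2 p2 = idm P].
End CatDefs.

Record functor (k : fieldType) (C D : kcat k) := Functor {
  fob : ob C -> ob D;
  fmap : forall X Y, mor X Y -> mor (fob X) (fob Y);
  fmap_id : forall X, fmap (idm X) = idm (fob X);
  fmap_comp : forall X Y Z (g : mor Y Z) (f : mor X Y),
      fmap (mcomp g f) = mcomp (fmap g) (fmap f);
  fmap_lin : forall X Y (a : k) (f g : mor X Y),
      fmap (a *: f + g) = a *: fmap f + fmap g
}.
Arguments fob {k C D} _ X.
Arguments fmap {k C D} _ {X Y} _.

(* naturality of a family a : F => G, for arbitrary (e.g. composite)
   functorial actions Fm, Gm on morphisms *)
Definition natural (k : fieldType) (C D : kcat k) (F G : ob C -> ob D)
  (Fm : forall X Y, mor X Y -> mor (F X) (F Y))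
  (Gm : forall X Y, mor X Y -> mor (G X) (G Y))
  (a : forall X, mor (F X) (G X)) :=
  forall X Y (f : mor X Y), mcomp (a Y) (Fm X Y f) = mcomp (Gm X Y f) (a X).

Record triang (k : fieldType) (C : kcat k) := Triang {
  sh : functor C C;
  shi : functor C C;
  sh_eta : forall X, mor X (fob shi (fob sh X));
  sh_eta_iso : forall X, is_iso (sh_eta X);
  sh_eta_nat : natural (fun X Y f => f) (fun X Y f => fmap shi (fmap sh f)) sh_eta;
  sh_eps : forall X, mor (fob sh (fob shi X)) X;
  sh_eps_iso : forall X, is_iso (sh_eps X);
  sh_eps_nat : natural (fun X Y f => fmap sh (fmap shi f)) (fun X Y f => f) sh_eps;
  zero_ex : exists Z : ob C, is_zero Z;
  biprod_ex : forall X Y : ob C, exists P, is_biprod X Y P;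
  dist : forall X Y Z : ob C, mor X Y -> mor Y Z -> mor Z (fob sh X) -> Prop;
  TR1_iso : forall X Y Z X' Y' Z' (f : mor X Y) (g : mor Y Z) (h : mor Z (fob sh X))
      (f' : mor X' Y') (g' : mor Y' Z') (h' : mor Z' (fob sh X'))
      (a : mor X X') (b : mor Y Y') (c : mor Z Z'),
      is_iso a -> is_iso b -> is_iso c ->
      mcomp b f = mcomp f' a -> mcomp c g = mcomp g' b ->
      mcomp (fmap sh a) h = mcomp h' c ->
      dist f g h -> dist f' g' h';
  TR1_id : forall X Z, is_zero Z -> dist (idm X) (0 : mor X Z) (0 : mor Z (fob sh X));
  TR1_cone : forall X Y (f : mor X Y),
      exists Z (g : mor Y Z) (h : mor Z (fob sh X)), dist f g h;
  TR2 : forall X Y Z (f : mor X Y) (g : mor Y Z) (h : mor Z (fob sh X)),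
      dist f g h <-> dist g h (- fmap sh f);
  TR3 : forall X Y Z X' Y' Z' (f : mor X Y) (g : mor Y Z) (h : mor Z (fob sh X))
      (f' : mor X' Y') (g' : mor Y' Z') (h' : mor Z' (fob sh X'))
      (a : mor X X') (b : mor Y Y'),
      dist f g h -> dist f' g' h' -> mcomp b f = mcomp f' a ->
      exists c : mor Z Z', mcomp c g = mcomp g' b /\ mcomp (fmap sh a) h = mcomp h' c;
  TR4 : forall X Y Z Z' X' Y' (f : mor X Y) (g : mor Y Z)
      (u1 : mor Y Z') (d1 : mor Z' (fob sh X))
      (u2 : mor Z X') (d2 : mor X' (fob sh Y))
      (u3 : mor Z Y') (d3 : mor Y' (fob sh X)),
      dist f u1 d1 -> dist g u2 d2 -> dist (mcomp g f) u3 d3 ->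
      exists (a : mor Z' Y') (b : mor Y' X'),
        [/\ dist a b (mcomp (fmap sh u1) d2),
            mcomp a u1 = mcomp u3 g, mcomp d3 a = d1,
            mcomp b u3 = u2 & mcomp d2 b = mcomp (fmap sh f) d3]
}.
Arguments sh {k C} _.
Arguments shi {k C} _.
Arguments dist {k C} _ {X Y Z} _ _ _.

Record exfunctor (k : fieldType) (C D : kcat k) (TC : triang C) (TD : triang D) :=
  ExFunctor {
  ef :> functor C D;
  ephi : forall X, mor (fob ef (fob (sh TC) X)) (fob (sh TD) (fob ef X));
  ephi_iso : forall X, is_iso (ephi X);
  ephi_nat : natural (fun X Y f => fmap ef (fmap (sh TC) f))
                     (fun X Y f => fmap (sh TD) (fmap ef f)) ephi;
  ef_dist : forall X Y Z (f : mor X Y) (g : mor Y Z) (h : mor Z (fob (sh TC) X)),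
      dist TC f g h -> dist TD (fmap ef f) (fmap ef g) (mcomp (ephi X) (fmap ef h))
}.

Record adjunction (k : fieldType) (C D : kcat k) (L : functor D C) (G : functor C D) :=
  Adjunction {
  adj_unit : forall Y : ob D, mor Y (fob G (fob L Y));
  adj_counit : forall X : ob C, mor (fob L (fob G X)) X;
  adj_unit_nat : natural (fun X Y f => f) (fun X Y f => fmap G (fmap L f)) adj_unit;
  adj_counit_nat : natural (fun X Y f => fmap L (fmap G f)) (fun X Y f => f) adj_counit;
  adj_tri1 : forall Y, mcomp (adj_counit (fob L Y)) (fmap L (adj_unit Y)) = idm (fob L Y);
  adj_tri2 : forall X, mcomp (fmap G (adj_counit X)) (adj_unit (fob G X)) = idm (fob G X)
}.
Arguments adj_unit {k C D L G} _ Y.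

Definition fully_faithful (k : fieldType) (C D : kcat k) (F : functor C D) :=
  forall X Y : ob C, bijective (@fmap _ _ _ F X Y).

(* Hom^*(X,Y) = 0 : Hom(X, Y[i]) = 0 for all integers i *)
Definition homs_vanish (k : fieldType) (C : kcat k) (T : triang C) (X Y : ob C) :=
  forall n : nat,
    (forall f : mor X (iter n (fob (sh T)) Y), f = 0) /\
    (forall f : mor X (iter n (fob (shi T)) Y), f = 0).

Definition ess_image (k : fieldType) (C D : kcat k) (F : functor C D) (B : ob D) :=
  exists (A : ob C) (f : mor (fob F A) B), is_iso f.

(* D = < Xs, Ys > semiorthogonal decomposition of the full subcategory D *)
Definition sod (k : fieldType) (C : kcat k) (T : triang C) (D Xs Ys : ob C -> Prop) :=
  [/\ (forall B, Xs B -> D B),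
      (forall B, Ys B -> D B),
      (forall X Y, Xs X -> Ys Y -> homs_vanish T Y X) &
      (forall B, D B -> exists (BY BX : ob C) (u : mor BY B) (v : mor B BX)
                               (w : mor BX (fob (sh T) BY)),
                   [/\ Ys BY, Xs BX & dist T u v w])].

(* The decomposition of B in B_FA is the dual-twist triangle T'B -> B -> FLB
   itself.  As F is fully faithful, the counit LF => id is invertible, so L
   maps eta_L to an isomorphism and the exact functor L kills T'B; thus T'B
   lies in ker L, and in ker Hom^*(A, R(-)) precisely when B lies in B_FA.
   Conversely eta_L is invertible on im F, so T' vanishes there, while
   T'B -> B is invertible when LB = 0; this gives both inclusions into B_FA.
   Semiorthogonality is the adjunction Hom^*(Y, FA') = Hom^*(LY, A'), and the
   two descriptions of the second component agree by the adjunction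
   Hom^*(FA, -) = Hom^*(A, R(-)). *)

From mathcomp Require Import all_boot all_algebra.
Set Implicit Arguments. Unset Strict Implicit. Unset Printing Implicit Defensive.
Import GRing.Theory.
Local Open Scope ring_scope.

Section KLinear.
Variables (k : fieldType) (C : kcat k).

Lemma mcomp0l (X Y Z : ob C) (f : mor X Y) : mcomp (0 : mor Y Z) f = 0.
Proof.
have := comp_linl (-1) (0 : mor Y Z) 0 f.
by rewrite scaleN1r oppr0 addr0 scaleN1r addNr.
Qed.

Lemma mcomp0r (X Y Z : ob C) (g : mor Y Z) : mcomp g (0 : mor X Y) = 0.
Proof.
have := comp_linr (-1) g (0 : mor X Y) 0.
by rewrite scaleN1r oppr0 addr0 scaleN1r addNr.
Qed.

Lemma mcompNl (X Y Z : ob C) (g : mor Y Z) (f : mor X Y) :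
  mcomp (- g) f = - mcomp g f.
Proof. by have := comp_linl (-1) g 0 f; rewrite !scaleN1r !addr0 mcomp0l addr0. Qed.

Lemma mcompNr (X Y Z : ob C) (g : mor Y Z) (f : mor X Y) :
  mcomp g (- f) = - mcomp g f.
Proof. by have := comp_linr (-1) g f 0; rewrite !scaleN1r !addr0 mcomp0r addr0. Qed.

Lemma is_zeroP (Z : ob C) : is_zero Z <-> idm Z = 0.
Proof.
split=> [/(_ Z) [idZ0 _]|id0 X]; first exact: idZ0.
split=> f.
  by rewrite -[f]comp_idr id0 mcomp0r.
by rewrite -[f]comp_idl id0 mcomp0l.
Qed.

Lemma iso_id (X : ob C) : is_iso (idm X).
Proof. by exists (idm X); rewrite comp_idl. Qed.

Lemma iso_comp (X Y Z : ob C) (g : mor Y Z) (f : mor X Y) :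
  is_iso g -> is_iso f -> is_iso (mcomp g f).
Proof.
move=> [g' [g'g gg']] [f' [f'f ff']]; exists (mcomp f' g'); split.
  by rewrite comp_assoc -(comp_assoc f') g'g comp_idr.
by rewrite comp_assoc -(comp_assoc g) ff' comp_idr.
Qed.

Lemma iso_inv (X Y : ob C) (f : mor X Y) :
  is_iso f -> exists2 g : mor Y X, is_iso g & mcomp f g = idm Y.
Proof. by move=> [g [gf fg]]; exists g => //; exists f. Qed.

Lemma iso_of_comp_id (X Y : ob C) (a : mor X Y) (b : mor Y X) :
  is_iso a -> mcomp a b = idm Y -> is_iso b.
Proof.
move=> [a' [a'a aa']] ab; suff -> : b = a' by exists a.
by rewrite -[b]comp_idl -a'a -comp_assoc ab comp_idr.
Qed.

Definition isomorphic (X Y : ob C) := exists f : mor X Y, is_iso f.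

Lemma isomorphic_sym (X Y : ob C) : isomorphic X Y -> isomorphic Y X.
Proof. by move=> [f /iso_inv [g iso_g _]]; exists g. Qed.

Definition hom_vanish (X W : ob C) := forall f : mor X W, f = 0.

Lemma hom_vanish_iso (X W W' : ob C) :
  isomorphic W W' -> hom_vanish X W' -> hom_vanish X W.
Proof.
move=> [i [i' [i'i _]]] vanW' f.
by rewrite -[f]comp_idl -i'i -comp_assoc (vanW' (mcomp i f)) mcomp0r.
Qed.

Lemma hom_vanish_zero (X W : ob C) : is_zero W -> hom_vanish X W.
Proof. by move=> /(_ X) []. Qed.

Lemma hom_vanish_zeroL (X W : ob C) : is_zero X -> hom_vanish X W.
Proof. by move=> /(_ W) []. Qed.

End KLinear.

Section Functor.
Variables (k : fieldType) (C D : kcat k) (G : functor C D).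

Lemma fmap0 (X Y : ob C) : fmap G (0 : mor X Y) = 0.
Proof.
have := fmap_lin G (-1) (0 : mor X Y) 0.
by rewrite scaleN1r oppr0 addr0 scaleN1r addNr.
Qed.

Lemma fmapN (X Y : ob C) (f : mor X Y) : fmap G (- f) = - fmap G f.
Proof. by have := fmap_lin G (-1) f 0; rewrite !scaleN1r !addr0 fmap0 addr0. Qed.

Lemma fmap_iso (X Y : ob C) (f : mor X Y) : is_iso f -> is_iso (fmap G f).
Proof.
by move=> [g [gf fg]]; exists (fmap G g); rewrite -!fmap_comp gf fg !fmap_id.
Qed.

Lemma is_zero_fob (Z : ob C) : is_zero Z -> is_zero (fob G Z).
Proof. by move=> /is_zeroP id0; apply/is_zeroP; rewrite -fmap_id id0 fmap0. Qed.

End Functor.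

Section Iterate.
Variables (k : fieldType) (C : kcat k) (G : functor C C).

Lemma isomorphic_iter n (X Y : ob C) :
  isomorphic X Y -> isomorphic (iter n (fob G) X) (iter n (fob G) Y).
Proof.
move=> isoXY; elim: n => [|n [g iso_g]] //=.
by exists (fmap G g); apply: fmap_iso.
Qed.

Lemma is_zero_iter n (Z : ob C) : is_zero Z -> is_zero (iter n (fob G) Z).
Proof. by move=> Z0; elim: n => //= n; apply: is_zero_fob. Qed.

End Iterate.

Section Triangulated.
Variables (k : fieldType) (C : kcat k) (T : triang C).
Local Notation S := (sh T).
Local Notation Si := (shi T).

Lemma homs_vanish_iso (X W W' : ob C) :
  isomorphic W W' -> homs_vanish T X W' -> homs_vanish T X W.
Proof.
move=> isoWW' vanW' n; have [van_sh van_shi] := vanW' n.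
by split; apply: hom_vanish_iso (isomorphic_iter _ _ isoWW') _.
Qed.

Lemma homs_vanish_zero (X W : ob C) : is_zero W -> homs_vanish T X W.
Proof. by move=> W0 n; split; apply/hom_vanish_zero/is_zero_iter. Qed.

Lemma homs_vanish_zeroL (X W : ob C) : is_zero X -> homs_vanish T X W.
Proof. by move=> X0 n; split; apply: hom_vanish_zeroL. Qed.

Lemma sh_faithful (X Y : ob C) (a b : mor X Y) : fmap S a = fmap S b -> a = b.
Proof.
move=> Sab; have [e [eta_e _]] := sh_eta_iso T Y.
rewrite -[a]comp_idl -[b]comp_idl -eta_e -!comp_assoc.
by rewrite !(sh_eta_nat T) /= Sab.
Qed.

Lemma shi_faithful (X Y : ob C) (a b : mor X Y) : fmap Si a = fmap Si b -> a = b.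
Proof.
move=> Siab; have [e [_ e_eps]] := sh_eps_iso T X.
rewrite -[a]comp_idr -[b]comp_idr -e_eps !comp_assoc.
by rewrite -!(sh_eps_nat T) /= Siab.
Qed.

Lemma sh_full (X Y : ob C) (c : mor (fob S X) (fob S Y)) :
  exists v : mor X Y, fmap S v = c.
Proof.
have [e [_ eta_e]] := sh_eta_iso T Y.
have [x [_ eta_x]] := sh_eta_iso T X.
exists (mcomp e (mcomp (fmap Si c) (sh_eta T X))); apply: shi_faithful.
rewrite -[LHS]comp_idr -eta_x comp_assoc -(sh_eta_nat T) /=.
by rewrite !comp_assoc eta_e comp_idl -comp_assoc eta_x comp_idr.
Qed.

Lemma is_zero_of_sh (X : ob C) : is_zero (fob S X) -> is_zero X.
Proof.
by move=> /is_zeroP Sid0; apply/is_zeroP/sh_faithful; rewrite fmap_id Sid0 fmap0.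
Qed.

Lemma dist_rot X Y Z (f : mor X Y) (g : mor Y Z) (h : mor Z (fob S X)) :
  dist T f g h -> dist T g h (- fmap S f).
Proof. by move/TR2. Qed.

Lemma dist_comp0 X Y Z (f : mor X Y) (g : mor Y Z) (h : mor Z (fob S X)) :
  dist T f g h -> mcomp g f = 0.
Proof.
move=> fgh; have [Z0 Z0_0] := zero_ex T.
have [c [cg _]] := TR3 (a := idm X) (b := f) (TR1_id T X Z0_0) fgh erefl.
by rewrite -cg mcomp0r.
Qed.

Lemma dist_factor_fst X Y Z (f : mor X Y) (g : mor Y Z) (h : mor Z (fob S X))
    W (u : mor W Y) :
  dist T f g h -> mcomp g u = 0 -> exists v : mor W X, mcomp f v = u.
Proof.
move=> fgh gu0; have [Z0 Z0_0] := zero_ex T.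
have gu : mcomp (0 : mor Z0 Z) 0 = mcomp g u by rewrite gu0 mcomp0l.
have [c [_ Sc]] :=
  TR3 (a := u) (b := 0) (dist_rot (TR1_id T W Z0_0)) (dist_rot fgh) gu.
have [v Sv] := sh_full c.
exists v; apply: sh_faithful; apply: oppr_inj.
by move: Sc; rewrite mcompNr mcompNl fmap_id comp_idr -Sv -fmap_comp.
Qed.

Lemma dist_factor_snd X Y Z (f : mor X Y) (g : mor Y Z) (h : mor Z (fob S X))
    W (u : mor Y W) :
  dist T f g h -> mcomp u f = 0 -> exists v : mor Z W, mcomp v g = u.
Proof.
move=> fgh uf0; have [Z0 Z0_0] := zero_ex T.
have Sid0 : dist T (0 : mor Z0 W) (idm W) 0.
  by apply/TR2; rewrite fmap0 oppr0; apply/TR1_id/is_zero_fob.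
have uf : mcomp u f = mcomp (0 : mor Z0 W) 0 by rewrite uf0 mcomp0l.
by have [c [cg _]] := TR3 fgh Sid0 uf; exists c; rewrite cg comp_idl.
Qed.

Lemma dist_iso_mid_zero X Y Z (f : mor X Y) (g : mor Y Z) (h : mor Z (fob S X)) :
  dist T f g h -> is_iso g -> is_zero X.
Proof.
move=> fgh [g' [g'g gg']].
have f0 : f = 0.
  by rewrite -[f]comp_idl -g'g -comp_assoc (dist_comp0 fgh) mcomp0r.
have h0 : h = 0.
  by rewrite -[h]comp_idr -gg' comp_assoc (dist_comp0 (dist_rot fgh)) mcomp0l.
(* In the twice-rotated triangle Z -> X[1] -> Y[1], the identity of X[1]
   factors through h = 0. *)
have Sf0 : mcomp (- fmap S f) (idm (fob S X)) = 0.
  by rewrite f0 fmap0 oppr0 mcomp0l.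
have [v hv] := dist_factor_fst (dist_rot (dist_rot fgh)) Sf0.
by apply/is_zero_of_sh/is_zeroP; rewrite -hv h0 mcomp0l.
Qed.

Lemma dist_zero_cone_iso X Y Z (f : mor X Y) (g : mor Y Z) (h : mor Z (fob S X)) :
  dist T f g h -> is_zero Z -> is_iso f.
Proof.
move=> fgh Z0.
have [s fs] := dist_factor_fst (u := idm Y) fgh (hom_vanish_zero Z0 _).
have [v vh] := dist_factor_snd (u := idm (fob S X)) (dist_rot (dist_rot fgh))
  (hom_vanish_zeroL Z0 _).
have [r Sr] := sh_full v.
have rf : mcomp (- r) f = idm X.
  apply: sh_faithful; rewrite fmap_comp fmapN mcompNl fmap_id Sr.
  by rewrite -vh mcompNr.
have sr : s = - r by rewrite -[s]comp_idl -rf -comp_assoc fs comp_idr.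
by exists s; rewrite sr; split=> //; rewrite -sr.
Qed.

End Triangulated.

Section ExactFunctor.
Variables (k : fieldType) (C D : kcat k) (TC : triang C) (TD : triang D)
  (G : exfunctor TC TD).

Lemma ef_shi_iso (Y : ob C) :
  isomorphic (fob G (fob (shi TC) Y)) (fob (shi TD) (fob G Y)).
Proof.
have [j iso_j _] := iso_inv (ephi_iso G (fob (shi TC) Y)).
exists (mcomp (fmap (shi TD) (fmap G (sh_eps TC Y)))
         (mcomp (fmap (shi TD) j) (sh_eta TD (fob G (fob (shi TC) Y))))).
apply: iso_comp; first by do 2 apply: fmap_iso; apply: sh_eps_iso.
by apply: iso_comp; [apply: fmap_iso | apply: sh_eta_iso].
Qed.

Lemma ef_iter_sh_iso n (Y : ob C) :
  isomorphic (fob G (iter n (fob (sh TC)) Y)) (iter n (fob (sh TD)) (fob G Y)).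
Proof.
elim: n => [|n [i iso_i]] /=; first by exists (idm _); apply: iso_id.
exists (mcomp (fmap (sh TD) i) (ephi G _)).
by apply: iso_comp; [apply: fmap_iso | apply: ephi_iso].
Qed.

Lemma ef_iter_shi_iso n (Y : ob C) :
  isomorphic (fob G (iter n (fob (shi TC)) Y)) (iter n (fob (shi TD)) (fob G Y)).
Proof.
elim: n => [|n [i iso_i]] /=; first by exists (idm _); apply: iso_id.
have [j iso_j] := ef_shi_iso (iter n (fob (shi TC)) Y).
by exists (mcomp (fmap (shi TD) i) j); apply: iso_comp; first apply: fmap_iso.
Qed.

End ExactFunctor.

Section Adjunction.
Variables (k : fieldType) (C D : kcat k) (Lf : functor D C) (G : functor C D)
  (adj : adjunction Lf G).

Lemma adj_factor_unit (Y : ob D) (Z : ob C) (f : mor Y (fob G Z)) :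
  f = mcomp (fmap G (mcomp (adj_counit adj Z) (fmap Lf f))) (adj_unit adj Y).
Proof.
by rewrite fmap_comp -comp_assoc -(adj_unit_nat adj) comp_assoc adj_tri2 comp_idl.
Qed.

Lemma adj_factor_counit (Y : ob D) (Z : ob C) (g : mor (fob Lf Y) Z) :
  g = mcomp (adj_counit adj Z) (fmap Lf (mcomp (fmap G g) (adj_unit adj Y))).
Proof.
by rewrite fmap_comp comp_assoc (adj_counit_nat adj) -comp_assoc adj_tri1 comp_idr.
Qed.

Lemma hom_vanish_adj (Y : ob D) (Z : ob C) :
  hom_vanish (fob Lf Y) Z <-> hom_vanish Y (fob G Z).
Proof.
split=> van f.
  by rewrite (adj_factor_unit f) [mcomp (adj_counit adj Z) _]van fmap0 mcomp0l.
by rewrite (adj_factor_counit f) [mcomp (fmap G f) _]van fmap0 mcomp0r.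
Qed.

Hypothesis Gff : fully_faithful G.

Lemma adj_counit_iso (X : ob C) : is_iso (adj_counit adj X).
Proof.
have [Ginv _ GK] := Gff X (fob Lf (fob G X)).
have [Ginv' GK' _] := Gff X X.
set g := Ginv (adj_unit adj (fob G X)).
have Gg : fmap G g = adj_unit adj (fob G X) by rewrite /g GK.
exists g; split.
  rewrite (adj_factor_counit (mcomp g _)) (adj_factor_counit (idm _)).
  congr (mcomp _ (fmap Lf _)).
  by rewrite !fmap_comp -comp_assoc adj_tri2 comp_idr Gg fmap_id comp_idl.
apply: (can_inj GK') => /=.
by rewrite fmap_comp Gg adj_tri2 fmap_id.
Qed.

Lemma adj_unit_iso_ess B : ess_image G B -> is_iso (adj_unit adj B).
Proof.
move=> [X [i iso_i]]; have [j iso_j ij] := iso_inv iso_i.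
have -> : adj_unit adj B =
    mcomp (mcomp (fmap G (fmap Lf i)) (adj_unit adj (fob G X))) j.
  by rewrite -(adj_unit_nat adj) -comp_assoc ij comp_idr.
apply: iso_comp => //; apply: iso_comp; first by do 2 apply: fmap_iso.
apply: iso_of_comp_id (adj_tri2 adj X).
by apply/fmap_iso/adj_counit_iso.
Qed.

Lemma fmap_adj_unit_iso B : is_iso (fmap Lf (adj_unit adj B)).
Proof. exact: iso_of_comp_id (adj_counit_iso _) (adj_tri1 adj B). Qed.

End Adjunction.

Section ExactAdjunction.
Variables (k : fieldType) (C D : kcat k) (TC : triang C) (TD : triang D)
  (Lf : functor D C) (G : exfunctor TC TD) (adj : adjunction Lf G).

Lemma homs_vanish_adj (Y : ob D) (Z : ob C) :
  homs_vanish TC (fob Lf Y) Z <-> homs_vanish TD Y (fob G Z).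
Proof.
split=> van n; have [van_sh van_shi] := van n; split.
- apply: hom_vanish_iso (isomorphic_sym (ef_iter_sh_iso G n Z)) _.
  exact/(hom_vanish_adj adj).
- apply: hom_vanish_iso (isomorphic_sym (ef_iter_shi_iso G n Z)) _.
  exact/(hom_vanish_adj adj).
- apply/(hom_vanish_adj adj).
  exact: hom_vanish_iso (ef_iter_sh_iso G n Z) van_sh.
- apply/(hom_vanish_adj adj).
  exact: hom_vanish_iso (ef_iter_shi_iso G n Z) van_shi.
Qed.

End ExactAdjunction.

Lemma sod_ext (k : fieldType) (C : kcat k) (T : triang C) (D Xs Ys Ys' : ob C -> Prop) :
  (forall B, Ys B <-> Ys' B) -> sod T D Xs Ys -> sod T D Xs Ys'.
Proof.
move=> eqY [XsD YsD orth dec]; split=> //.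
- by move=> B /eqY /YsD.
- by move=> X Y XsX /eqY /(orth X Y XsX).
move=> B /dec [BY [BX [u [v [w [YsBY XsBX uvw]]]]]].
by exists BY, BX, u, v, w; split=> //; apply/eqY.
Qed.

Section Exceptional.
Variables (k : fieldType) (CA CB : kcat k) (TA : triang CA) (TB : triang CB).
Variables (F : exfunctor TA TB) (L : exfunctor TB TA) (LF : adjunction L F).
Hypothesis Fff : fully_faithful F.
Variables (T' : ob CB -> ob CB) (tm : forall B, mor (T' B) B)
  (td : forall B, mor (fob F (fob L B)) (fob (sh TB) (T' B))).
Hypothesis Htw : forall B, dist TB (tm B) (adj_unit LF B) (td B).

Lemma twist_zero_of_ess_image B : ess_image F B -> is_zero (T' B).
Proof. by move=> /(adj_unit_iso_ess LF Fff); apply: dist_iso_mid_zero (Htw B). Qed.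

Lemma twist_iso_of_L_zero B : is_zero (fob L B) -> is_iso (tm B).
Proof. by move=> /(is_zero_fob F); apply: dist_zero_cone_iso (Htw B). Qed.

Lemma L_twist_zero B : is_zero (fob L (T' B)).
Proof. exact: dist_iso_mid_zero (ef_dist L (Htw B)) (fmap_adj_unit_iso LF Fff B). Qed.

Variables (R : functor CB CA) (A : ob CA).

Lemma sod_twist :
  sod TB (fun B => homs_vanish TA A (fob R (T' B))) (ess_image F)
         (fun B => is_zero (fob L B) /\ homs_vanish TA A (fob R B)).
Proof.
split.
- by move=> B /twist_zero_of_ess_image /(is_zero_fob R) /homs_vanish_zero.
- move=> B [/twist_iso_of_L_zero /(fmap_iso R) iso_Rtm]; apply: homs_vanish_iso.
  by exists (fmap R (tm B)).
- move=> X Y [A' FA'X] [LY0 _]; apply: homs_vanish_iso (isomorphic_sym FA'X) _.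
  exact/(homs_vanish_adj LF)/homs_vanish_zeroL.
move=> B vanB; exists (T' B), (fob F (fob L B)), (tm B), (adj_unit LF B), (td B).
split=> //; first by split; first exact: L_twist_zero.
by exists (fob L B), (idm _); apply: iso_id.
Qed.

End Exceptional.

Theorem theorem3p22 (k : fieldType) (CA CB : kcat k)
  (TA : triang CA) (TB : triang CB)
  (F : exfunctor TA TB) (L R : exfunctor TB TA)
  (LF : adjunction L F) (FR : adjunction F R)
  (Fff : fully_faithful F)
  (* dual twist  T' B -> B --eta_L--> F L B -> (T' B)[1] *)
  (T' : ob CB -> ob CB) (tm : forall B, mor (T' B) B)
  (td : forall B, mor (fob F (fob L B)) (fob (sh TB) (T' B)))
  (Htw : forall B, dist TB (tm B) (adj_unit LF B) (td B))
  (A : ob CA) :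
  let BFA := fun B : ob CB => homs_vanish TA A (fob R (T' B)) in
  let Y1 := fun B : ob CB => is_zero (fob L B) /\ homs_vanish TA A (fob R B) in
  let Y2 := fun B : ob CB => is_zero (fob L B) /\ homs_vanish TB (fob F A) B in
  sod TB BFA (ess_image F) Y1 /\ sod TB BFA (ess_image F) Y2.
Proof.
move=> BFA Y1 Y2.
have sodY1 : sod TB BFA (ess_image F) Y1 := sod_twist Fff Htw R A.
split=> //; apply: sod_ext sodY1 => B.
by split=> -[LB0 vanB]; split=> //; apply/(homs_vanish_adj FR).
Qed.
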